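(* Let $X$ be a regular CW complex. Then for each $n\ge0$ the canonical map $\hat h_n:\coprod_{j\in J_n}\mathbb{D}^{n,m_n(j)}\to X^{(n)}$ is an induction onto a $D$-open subset of $X^{(n)}$.
   Context: An induction is an injective smooth map that is a diffeomorphism onto its image with the subset diffeology. $D$-topology: $O\subset Y$ is open iff $P^{-1}(O)$ is open for every plot $P$. Let $\ell(t)=0$ for $t\le0$, $e^{-1/t}$ for $t>0$; $\alpha_0=\int_0^1\ell(3x)\ell(3-3x)dx$; $\lambda(t)=\frac1{\alpha_0}\int_0^t\ell(3x)\ell(3-3x)dx$; $\phi(t)=\int_0^{1/2+t}\lambda(x)dx$. For integers $n,m\ge0$: $\mathbb{D}^{n,m}=\{(u,v)\in\mathbb{R}^n\times\mathbb{R}^m:\|u\|\ge1-\phi(2-\|u\|-\|v\|)\}$, $\mathbb{S}^{n-1,m}=\{(u,v):\|u\|\ge1\}$ (empty for $n=0$), with subset diffeologies. A fat CW complex is a diffeological space $X$ with subspaces $\emptyset=X^{(-1)}\subset X^{(0)}\subset\cdots$, index sets $J_n$, maps $m_n:J_n\to\mathbb{N}_0$ and smooth maps $h_n:\coprod_{j\in J_n}\mathbb{S}^{n-1,m_n(j)}\to X^{(n-1)}$ such that each $X^{(n)}$ is the pushout in diffeological spaces of the inclusion $i_n:\coprod_j\mathbb{S}^{n-1,m_n(j)}\hookrightarrow\coprod_j\mathbb{D}^{n,m_n(j)}$ and $h_n$ (with induced map $\hat h_n:\coprod_j\mathbb{D}^{n,m_n(j)}\to X^{(n)}$), and $X$ is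 the diffeological colimit of the $X^{(n)}$. It is regular (a regular CW complex) if every $h_n$ is an induction whose image is $D$-open in $X^{(n-1)}$. *)

From mathcomp Require Import all_boot all_order all_algebra.
From mathcomp Require Import all_classical all_reals all_analysis.
From mathcomp Require Import Rstruct Rstruct_topology.

Import Order.TTheory GRing.Theory Num.Theory.
Import numFieldNormedType.Exports.
Local Open Scope classical_set_scope.
Local Open Scope ring_scope.

Section Diffeology.
Variable R : realType.

(** Euclidean space R^n is 'rV[R]_n (its usual topology = product topology). *)
Notation E n := 'rV[R]_n.

Fixpoint iter_derive {k n : nat} (vs : seq (E k)) (f : E k -> E n) : E k -> E n :=
  match vs with
  | [::] => f
  | v :: vs' => fun x => derive (iter_derive vs' f) x v
  end.

Definition smooth_on {k n : nat} (V : set (E k)) (f : E k -> E n) : Prop :=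
  forall (vs : seq (E k)) (x : E k), V x ->
    {for x, continuous (iter_derive vs f)} /\
    forall v : E k, derivable (iter_derive vs f) x v.

(** ** Diffeologies.  A parametrization of X is a map P : U -> X defined on
    an open subset U of some R^n; here P : {x | U x} -> X.
    A candidate diffeology is the family of its plots. *)
Definition plot_set (X : Type) : Type :=
  forall (n : nat) (U : set (E n)), ({x | U x} -> X) -> Prop.

Definition is_diffeology {X : Type} (D : plot_set X) : Prop :=
  (forall n U P, D n U P -> open U) /\
  (forall n (U : set (E n)) (x : X), open U -> D n U (fun _ => x)) /\
  (forall n k (U : set (E n)) (V : set (E k)) (P : {x | U x} -> X)
          (F : E k -> E n) (hF : forall y, V y -> U (F y)),
     open V -> D n U P -> smooth_on V F ->
     D k V (fun y => P (exist _ (F (proj1_sig y)) (hF _ (proj2_sig y))))) /\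
  (forall n (U : set (E n)) (P : {x | U x} -> X), open U ->
     (forall x, U x -> exists V : set (E n), open V /\ V x /\
        exists hVU : (forall y, V y -> U y),
          D n V (fun y => P (exist _ (proj1_sig y) (hVU _ (proj2_sig y))))) ->
     D n U P).

Definition dsmooth {X Y : Type} (DX : plot_set X) (DY : plot_set Y)
  (f : X -> Y) : Prop :=
  forall n U P, DX n U P -> DY n U (fun x => f (P x)).

Definition diffeomorphism {X Y : Type} (DX : plot_set X) (DY : plot_set Y)
  (f : X -> Y) : Prop :=
  dsmooth DX DY f /\
  exists g : Y -> X, dsmooth DY DX g /\ cancel f g /\ cancel g f.

Definition sub_diffeology {Y : Type} (DY : plot_set Y) (A : set Y)
  : plot_set {y | A y} :=
  fun n U P => DY n U (fun x => proj1_sig (P x)).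

Definition corestr {X Y : Type} (f : X -> Y) : X -> {y | range f y} :=
  fun x => exist (range f) (f x) (ex_intro2 _ _ x I erefl).

Definition induction {X Y : Type} (DX : plot_set X) (DY : plot_set Y)
  (f : X -> Y) : Prop :=
  injective f /\ dsmooth DX DY f /\
  diffeomorphism DX (sub_diffeology DY (range f)) (corestr f).

Definition D_open {X : Type} (DX : plot_set X) (O : set X) : Prop :=
  forall n U P, DX n U P ->
    open [set x : E n | exists hx : U x, O (P (exist _ x hx))].

Definition euclid2_diffeology (a b : nat) : plot_set (E a * E b) :=
  fun n U P => open U /\
    exists (G1 : E n -> E a) (G2 : E n -> E b),
      smooth_on U G1 /\ smooth_on U G2 /\
      forall x : {x | U x}, P x = (G1 (proj1_sig x), G2 (proj1_sig x)).

Definition sum_diffeology {J : Type} {Xs : J -> Type}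
  (Ds : forall j, plot_set (Xs j)) : plot_set {j : J & Xs j} :=
  fun n U P => open U /\
    forall x : {x | U x}, exists V : set (E n), open V /\ V (proj1_sig x) /\
      exists (hVU : forall y, V y -> U y) (j : J) (Q : {y | V y} -> Xs j),
        Ds j n V Q /\
        forall y : {y | V y},
          P (exist _ (proj1_sig y) (hVU _ (proj2_sig y))) = existT _ j (Q y).

Definition ell (t : R) : R := if t <= 0 then 0 else expR (- t^-1).

Definition oint (f : R -> R) (a b : R) : R :=
  if a <= b then (\int[lebesgue_measure]_(x in `[a, b]) f x)%R
  else - (\int[lebesgue_measure]_(x in `[b, a]) f x)%R.

Definition bump (x : R) : R := ell (3 * x) * ell (3 - 3 * x).
Definition alpha0 : R := oint bump 0 1.
Definition lambda (t : R) : R := alpha0^-1 * oint bump 0 t.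
Definition phi (t : R) : R := oint lambda 0 (2^-1 + t).

Definition enorm {n : nat} (u : E n) : R := Num.sqrt (\sum_(i < n) u ord0 i ^+ 2).

Definition fat_disk (n m : nat) : set (E n * E m) :=
  [set p : E n * E m | 1 - phi (2 - enorm p.1 - enorm p.2) <= enorm p.1].
Definition fat_sphere (n m : nat) : set (E n * E m) :=
  [set p : E n * E m | 1 <= enorm p.1].

Definition cells_D (n : nat) {J : Type} (m : J -> nat) : Type :=
  {j : J & {p : E n * E (m j) | fat_disk n (m j) p}}.
Definition cells_S (n : nat) {J : Type} (m : J -> nat) : Type :=
  {j : J & {p : E n * E (m j) | fat_sphere n (m j) p}}.

Definition cells_D_diffeology n {J} (m : J -> nat) : plot_set (cells_D n m) :=
  sum_diffeology (fun j => sub_diffeology (@euclid2_diffeology n (m j))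
                                          (fat_disk n (m j))).
Definition cells_S_diffeology n {J} (m : J -> nat) : plot_set (cells_S n m) :=
  sum_diffeology (fun j => sub_diffeology (@euclid2_diffeology n (m j))
                                          (fat_sphere n (m j))).

(* The square  A --h--> C
               |i       |k
               B --g--> P   is a pushout. *)
Definition is_pushout {A B C P : Type}
  (DA : plot_set A) (DB : plot_set B) (DC : plot_set C) (DP : plot_set P)
  (i : A -> B -> Prop) (* graph of the map i : A -> B *)
  (h : A -> C) (k : C -> P) (g : B -> P) : Prop :=
  dsmooth DC DP k /\ dsmooth DB DP g /\
  (forall a b, i a b -> k (h a) = g b) /\
  forall (Z : Type) (DZ : plot_set Z), is_diffeology DZ ->
  forall (f1 : C -> Z) (f2 : B -> Z),
    dsmooth DC DZ f1 -> dsmooth DB DZ f2 ->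
    (forall a b, i a b -> f1 (h a) = f2 b) ->
    exists u : P -> Z, dsmooth DP DZ u /\
      (forall c, u (k c) = f1 c) /\ (forall b, u (g b) = f2 b) /\
      forall u' : P -> Z, dsmooth DP DZ u' ->
        (forall c, u' (k c) = f1 c) -> (forall b, u' (g b) = f2 b) ->
        forall p, u' p = u p.

(* The inclusion  i_n : coprod S^{n-1,m_n(j)} -> coprod D^{n,m_n(j)}, given
   by its graph (the identity on underlying points of each summand). *)
Definition incl_SD n {J} (m : J -> nat) (a : cells_S n m) (b : cells_D n m) : Prop :=
  exists (j : J) (p : E n * E (m j)) (hS : fat_sphere n (m j) p)
         (hD : fat_disk n (m j) p),
    a = existT _ j (exist _ p hS) /\ b = existT _ j (exist _ p hD).

Section FatCW.
Variables (X : Type) (DX : plot_set X).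
(* skel n = X^{(n)};  prevskel n = X^{(n-1)}, with X^{(-1)} = empty *)
Variable skel : nat -> set X.
Definition prevskel (n : nat) : set X :=
  match n with 0 => set0 | n'.+1 => skel n' end.
Variable skel_sub : forall n x, skel n x -> skel n.+1 x.

Lemma prevskel_sub n x : prevskel n x -> skel n x.
Proof. by case: n => [[]|n] /=; apply: skel_sub. Qed.

Definition skel_incl (n : nat) : {x | prevskel n x} -> {x | skel n x} :=
  fun y => exist _ (proj1_sig y) (prevskel_sub n _ (proj2_sig y)).

Definition skel_diffeology (n : nat) := sub_diffeology DX (skel n).
Definition prevskel_diffeology (n : nat) := sub_diffeology DX (prevskel n).

Variables (J : nat -> Type) (m : forall n, J n -> nat).
Variable h : forall n, cells_S n (m n) -> {x | prevskel n x}.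
Variable hhat : forall n, cells_D n (m n) -> {x | skel n x}.

Definition is_seq_colimit : Prop :=
  forall (Z : Type) (DZ : plot_set Z), is_diffeology DZ ->
  forall g : forall n, {x | skel n x} -> Z,
    (forall n, dsmooth (skel_diffeology n) DZ (g n)) ->
    (forall n (x : X) (hx : skel n x),
        g n.+1 (exist _ x (skel_sub n x hx)) = g n (exist _ x hx)) ->
    exists u : X -> Z, dsmooth DX DZ u /\
      (forall n y, u (proj1_sig y) = g n y) /\
      forall u' : X -> Z, dsmooth DX DZ u' ->
        (forall n y, u' (proj1_sig y) = g n y) -> forall x, u' x = u x.

Definition is_fat_CW : Prop :=
  is_diffeology DX /\
  (forall n, dsmooth (cells_S_diffeology n (m n)) (prevskel_diffeology n) (h n)) /\
  (forall n, is_pushout (cells_S_diffeology n (m n)) (cells_D_diffeology n (m n))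
                        (prevskel_diffeology n) (skel_diffeology n)
                        (@incl_SD n (J n) (m n)) (h n) (skel_incl n) (hhat n)) /\
  is_seq_colimit.

Definition is_regular_CW : Prop :=
  is_fat_CW /\
  forall n, induction (cells_S_diffeology n (m n)) (prevskel_diffeology n) (h n) /\
            D_open (prevskel_diffeology n) (range (h n)).

End FatCW.

End Diffeology.

From Pilot Require Import Defs.
From mathcomp Require Import all_boot all_order all_algebra.
From mathcomp Require Import all_classical all_reals all_analysis.
From mathcomp Require Import Rstruct Rstruct_topology.
From mathcomp Require Import ring.
From HB Require Import structures.

(* Mapping into coarse diffeological spaces, where every parametrization
   is a plot, turns the universal property of the pushout X^(n) into a
   set-theoretic one: every point comes from X^(n-1) or from a disk, hhat_n
   only identifies points of the spheres, and a point of X^(n-1) hit by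
   hhat_n lies in the image of h_n.  As h_n is injective, so is hhat_n.
   The plots of X^(n) that lift locally through hhat_n near each point of
   its image form a diffeology.  The inclusion of X^(n-1) is smooth into it
   because the image of h_n is D-open and h_n is an induction, and hhat_n is
   trivially smooth into it; so by the universal property every plot of
   X^(n) lifts locally.  This is the smoothness of the inverse of hhat_n and
   the D-openness of its image.  Closure of that diffeology under smooth
   reparametrization needs the chain rule for smooth maps between Euclidean
   spaces, derived from the fact that continuous partial derivatives give a
   differential. *)

Import Order.TTheory GRing.Theory Num.Theory numFieldNormedType.Exports.
Local Open Scope classical_set_scope.
Local Open Scope ring_scope.

Section SmoothUpTo.
Context {R : realType}.

Fixpoint derive_iter {V W : normedModType R} (vs : seq V) (f : V -> W) : V -> W :=
  if vs is v :: vs' then fun x => 'D_v (derive_iter vs' f) x else f.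

Lemma iter_deriveE k n vs (f : 'rV[R]_k -> 'rV[R]_n) :
  iter_derive R vs f = derive_iter vs f.
Proof. by elim: vs => //= v vs ->. Qed.

Definition smooth_upto {V W : normedModType R} N (U : set V) (f : V -> W) :=
  forall vs, (size vs <= N)%N -> forall x, U x ->
    {for x, continuous (derive_iter vs f)} /\
    forall v, derivable (derive_iter vs f) x v.

Lemma smooth_onE k n (U : set 'rV[R]_k) (f : 'rV[R]_k -> 'rV[R]_n) :
  smooth_on R U f <-> forall N, smooth_upto N U f.
Proof.
split=> [sf N vs _ x Ux|sf vs x Ux]; first by rewrite -iter_deriveE; exact: sf.
by rewrite iter_deriveE; exact: (sf (size vs) vs (leqnn _)).
Qed.

Context {V W : normedModType R}.
Implicit Types (U : set V) (f g : V -> W).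

Lemma derive_iter_rcons vs v f :
  derive_iter (rcons vs v) f = derive_iter vs (fun x => 'D_v f x).
Proof. by elim: vs => //= a vs ->. Qed.

Lemma smooth_upto0P U f : smooth_upto 0 U f <->
  forall x, U x -> {for x, continuous f} /\ forall v, derivable f x v.
Proof.
split=> [sf x|sf vs]; first exact: sf [::] (leqnn _) x.
by rewrite leqn0 => /nilP ->; exact: sf.
Qed.

Lemma smooth_uptoS N U f : smooth_upto N.+1 U f <->
  smooth_upto 0 U f /\ forall v, smooth_upto N U (fun x => 'D_v f x).
Proof.
split=> [sf|[s0 sD]].
  split=> [vs vs0|v vs svs]; first by apply: sf; exact: leq_trans vs0 _.
  by rewrite -derive_iter_rcons; apply: sf; rewrite size_rcons ltnS.
case/lastP=> [|vs v] svs; first exact: s0.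
by rewrite derive_iter_rcons; apply: sD; rewrite size_rcons ltnS in svs.
Qed.

Lemma smooth_upto_le M N U f : (M <= N)%N -> smooth_upto N U f -> smooth_upto M U f.
Proof. by move=> MN sf vs svs; apply: sf; exact: leq_trans svs MN. Qed.

Lemma smooth_upto_derivable {N U f x} v : smooth_upto N U f -> U x -> derivable f x v.
Proof. by move=> sf Ux; have [_] := sf [::] (leq0n _) x Ux. Qed.

Lemma near_eq_continuous f g x :
  (\forall y \near x, f y = g y) -> {for x, continuous f} -> {for x, continuous g}.
Proof.
move=> fg cf; have gx : g @ x --> f x by exact: cvg_trans (near_eq_cvg fg) cf.
by move: gx; rewrite (nbhs_singleton fg).
Qed.

Lemma near_eq_derive_iter {U f g} : open U -> (forall x, U x -> f x = g x) ->
  forall vs x, U x -> \forall y \near x, derive_iter vs f y = derive_iter vs g y.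
Proof.
move=> oU fg vs x Ux; have nU : nbhs x U by exact: open_nbhs_nbhs.
elim: vs x Ux nU => [|v vs IH] x Ux nU /=; apply: filterS nU => y Uy.
  exact: fg.
by apply: near_eq_derive; apply: IH; last exact: open_nbhs_nbhs.
Qed.

Lemma smooth_upto_eq N U f g : open U -> (forall x, U x -> f x = g x) ->
  smooth_upto N U f -> smooth_upto N U g.
Proof.
move=> oU fg sf vs svs x Ux; have [cf df] := sf vs svs x Ux.
have fgx := near_eq_derive_iter oU fg vs x Ux.
split=> [|v]; first exact: near_eq_continuous fgx cf.
by apply: near_eq_derivable (df v); apply: filterS fgx.
Qed.

Lemma smooth_upto_cst N U (c : W) : smooth_upto N U (fun _ => c).
Proof.
have iterD_cst vs : derive_iter vs (fun _ : V => c) = fun=> if vs is [::] then c else 0.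
  elim: vs => //= v vs ->; apply: funext => x.
  by case: vs => [|? ?]; rewrite derive_cst.
move=> vs _ x _; rewrite iterD_cst; split=> [|v]; first exact: cst_continuous.
exact: derivable_cst.
Qed.

Lemma smooth_uptoD N U f g : open U ->
  smooth_upto N U f -> smooth_upto N U g -> smooth_upto N U (f \+ g).
Proof.
move=> oU.
have D0 f' g' : smooth_upto 0 U f' -> smooth_upto 0 U g' -> smooth_upto 0 U (f' \+ g').
  move=> /smooth_upto0P sf /smooth_upto0P sg; apply/smooth_upto0P => x Ux.
  have [cf df] := sf x Ux; have [cg dg] := sg x Ux.
  by split=> [|v]; [exact: continuousD|exact: derivableD].
elim: N f g => [|N IH] f g; first exact: D0.
move=> /smooth_uptoS[sf0 sfD] /smooth_uptoS[sg0 sgD]; apply/smooth_uptoS.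
split=> [|v]; first exact: D0.
apply: (@smooth_upto_eq _ _ (fun x => 'D_v f x + 'D_v g x)) => // [x Ux|].
  by rewrite deriveD //; [exact: smooth_upto_derivable sf0 Ux|exact: smooth_upto_derivable sg0 Ux].
exact: IH.
Qed.

Lemma smooth_upto_sum N U p (fs : 'I_p -> V -> W) : open U ->
  (forall i, smooth_upto N U (fs i)) ->
  smooth_upto N U (fun x => \sum_(i < p) fs i x).
Proof.
move=> oU sfs; rewrite -fct_sumE.
apply: (big_ind (smooth_upto N U)) => [|f g|i _]; last exact: sfs.
- exact: (smooth_upto_cst N U (0 : W)).
- exact: smooth_uptoD.
Qed.

End SmoothUpTo.

Section SmoothUpToMatrix.
Context {R : realType} {V : normedModType R} {p q : nat}.
Implicit Types (U : set V) (f : V -> 'M[R]_(p, q)).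

Lemma smooth_upto_coord N U f i j : open U ->
  smooth_upto N U f -> smooth_upto N U (fun x => f x i j).
Proof.
move=> oU.
have coord0 f' : smooth_upto 0 U f' -> smooth_upto 0 U (fun x => f' x i j).
  move=> /smooth_upto0P sf; apply/smooth_upto0P => x Ux; have [cf df] := sf x Ux.
  split=> [|v]; first exact: continuous_comp cf (@coord_continuous R _ _ i j _).
  by move/derivable_mxP: (df v); apply.
elim: N f => [|N IH] f; first exact: coord0.
move=> /smooth_uptoS[sf0 sfD]; apply/smooth_uptoS; split; first exact: coord0.
move=> v; apply: (@smooth_upto_eq _ _ _ N U (fun x => 'D_v f x i j)) => //.
  by move=> x Ux; rewrite (derive_mx (smooth_upto_derivable v sf0 Ux)) mxE.
exact: IH.
Qed.

Lemma deriveZl {c : V -> R} {f x v} : derivable c x v -> derivable f x v ->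
  derivable (fun y => c y *: f y) x v /\
  'D_v (fun y => c y *: f y) x = 'D_v c x *: f x + c x *: 'D_v f x.
Proof.
move=> dc df.
have cfE i j : (fun y => (c y *: f y) i j) = c * (fun y => f y i j).
  by apply: funext => y; rewrite mxE.
have dfij i j : derivable (fun y => f y i j) x v by move/derivable_mxP: df.
have dcf : derivable (fun y => c y *: f y) x v.
  by apply/derivable_mxP => i j; rewrite cfE; exact: derivableM.
split=> //; rewrite (derive_mx dcf); apply/matrixP => i j.
rewrite !mxE cfE deriveM // (derive_mx df) !mxE.
by rewrite addrC /GRing.scale /= mulrC [_ * f x i j]mulrC.
Qed.

Lemma smooth_uptoZl N U (c : V -> R) f : open U ->
  smooth_upto N U c -> smooth_upto N U f -> smooth_upto N U (fun x => c x *: f x).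
Proof.
move=> oU.
have Z0 (c' : V -> R) f' : smooth_upto 0 U c' -> smooth_upto 0 U f' ->
    smooth_upto 0 U (fun x => c' x *: f' x).
  move=> /smooth_upto0P sc /smooth_upto0P sf; apply/smooth_upto0P => x Ux.
  have [cc dc] := sc x Ux; have [cf df] := sf x Ux.
  split=> [|v]; first exact: continuousZ.
  by have [] := deriveZl (dc v) (df v).
elim: N c f => [|N IH] c f; first exact: Z0.
move=> /[dup] sc /smooth_uptoS[sc0 scD] /[dup] sf /smooth_uptoS[sf0 sfD].
apply/smooth_uptoS; split=> [|v]; first exact: Z0.
apply: (@smooth_upto_eq _ _ _ N U
  ((fun x => 'D_v c x *: f x) \+ (fun x => c x *: 'D_v f x))) => //.
  move=> x Ux.
  by have [_ ->] := deriveZl (smooth_upto_derivable v sc0 Ux) (smooth_upto_derivable v sf0 Ux).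
by apply: smooth_uptoD => //; apply: IH => //; exact: smooth_upto_le.
Qed.

End SmoothUpToMatrix.

Section PartialDerivatives.
Context {R : realType}.

Lemma normr_mx_entry_le m n (M : 'M[R]_(m, n)) i j : `|M i j| <= `|M|.
Proof.
rewrite [leRHS]/Num.Def.normr /= mx_normrE.
exact: (le_bigmax _ (fun ij => `|M ij.1 ij.2|) (i, j)).
Qed.

Lemma mx_norm_le m n (M : 'M[R]_(m, n)) K : 0 <= K ->
  (forall i j, `|M i j| <= K) -> `|M| <= K.
Proof.
move=> K0 MK; rewrite [leLHS]/Num.Def.normr /= mx_normrE.
by apply: bigmax_le => // -[i j] _; exact: MK.
Qed.

Lemma derivable_along_line {V W : normedModType R} {G : V -> W} {p e t} :
  derivable G (p + t *: e) e ->
  derivable (fun s : R => G (p + s *: e)) t 1 /\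
  'D_1 (fun s : R => G (p + s *: e)) t = 'D_e G (p + t *: e).
Proof.
have quotE : (fun h : R => h^-1 *: (G (p + (h *: 1 + t) *: e) - G (p + t *: e))) =
             (fun h : R => h^-1 *: (G (h *: e + (p + t *: e)) - G (p + t *: e))).
  apply: funext => h; congr (_ *: (G _ - _)).
  by rewrite [h *: 1]mulr1 scalerDl addrCA addrA.
by rewrite /derivable /derive /= quotE.
Qed.

Lemma mvt_deviation (psi : R -> R) (a c K : R) :
  (forall s, `|s| <= `|a| -> derivable psi s 1 /\ `|'D_1 psi s - c| <= K) ->
  `|psi a - psi 0 - a * c| <= `|a| * K.
Proof.
move=> dpsi.
have [a0|a0|->] := ltgtP a 0; last by rewrite subrr mul0r subr0 normr0 mul0r.
- have dI x : x \in `[a, 0] -> derivable psi x 1.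
    rewrite in_itv /= => /andP[ax x0]; apply: (proj1 (dpsi x _)).
    by rewrite ler0_norm // ler0_norm ?(ltW a0) // lerN2.
  have [x] := MVT a0 (fun x xI => derivableP (dI x (subset_itv_oo_cc xI)))
    (derivable_within_continuous dI).
  rewrite in_itv /= => /andP[ax x0] psiE.
  have [_ Kx] : derivable psi x 1 /\ `|'D_1 psi x - c| <= K.
    by apply: dpsi; rewrite ler0_norm ?(ltW x0) // ler0_norm ?(ltW a0) // lerN2 ltW.
  have -> : psi a - psi 0 = a * 'D_1 psi x by rewrite -opprB psiE sub0r mulrN opprK mulrC.
  by rewrite -mulrBr normrM ler_wpM2l.
- have dI x : x \in `[0, a] -> derivable psi x 1.
    rewrite in_itv /= => /andP[x0 xa].
    by apply: (proj1 (dpsi x _)); rewrite ger0_norm // ger0_norm ?(ltW a0).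
  have [x] := MVT a0 (fun x xI => derivableP (dI x (subset_itv_oo_cc xI)))
    (derivable_within_continuous dI).
  rewrite in_itv /= => /andP[x0 xa] psiE.
  have [_ Kx] : derivable psi x 1 /\ `|'D_1 psi x - c| <= K.
    by apply: dpsi; rewrite ger0_norm ?(ltW x0) // ger0_norm ?(ltW a0) // ltW.
  by rewrite psiE subr0 mulrC -mulrBr normrM ler_wpM2l.
Qed.

Variable n : nat.
Local Notation V := 'rV[R]_n.

(* [row_prefix k d] keeps the first [k] coordinates of [d]; the increments
   along these prefixes telescope [G (y + d) - G y] into one-variable steps. *)
Definition row_prefix (k : nat) (d : V) : V :=
  \row_j (if (j < k)%N then d 0 j else 0).

Lemma row_prefix0 d : row_prefix 0 d = 0.
Proof. by apply/matrixP => a j; rewrite !mxE. Qed.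

Lemma row_prefix_full d : row_prefix n d = d.
Proof. by apply/matrixP => a j; rewrite !mxE ltn_ord (ord1 a). Qed.

Lemma row_prefixS (i : 'I_n) d :
  row_prefix i.+1 d = row_prefix i d + d 0 i *: 'e_i.
Proof.
apply/matrixP => a j; rewrite !mxE (ord1 a) eqxx /= ltnS leq_eqVlt.
have -> : (j == i) = (j == i :> nat) by [].
case: (ltngtP j i) => [ji|ij|/val_inj ->].
- by rewrite orbT mulr0 addr0.
- by rewrite mulr0 addr0.
- by rewrite mulr1 add0r.
Qed.

Lemma norm_row_prefix_shift {i : 'I_n} {d : V} {s : R} : `|s| <= `|d 0 i| ->
  `|row_prefix i d + s *: 'e_i| <= `|d|.
Proof.
move=> sd; apply: mx_norm_le => // a j; rewrite !mxE (ord1 a) eqxx /=.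
have [/val_inj ->|ji] := eqVneq (val j) (val i).
  by rewrite ltnn eqxx mulr1 add0r (le_trans sd) // normr_mx_entry_le.
have -> : (j == i) = false by apply/negbTE; apply: contraNneq ji => ->.
rewrite mulr0 addr0; case: ifP => _; last by rewrite normr0.
exact: normr_mx_entry_le.
Qed.

Section ContinuousPartials.
Variables (G : V -> R) (U : set V) (y : V).
Hypotheses (oU : open U) (Uy : U y)
  (dG : forall z i, U z -> derivable G z ('e_i))
  (cdG : forall i, {for y, continuous (fun z => 'D_('e_i) G z)}).

Let dG_y (d : V) := \sum_(i < n) d 0 i * 'D_('e_i) G y.

Let dG_y_linear : linear dG_y.
Proof.
move=> a u v; rewrite /dG_y scaler_sumr -big_split /=; apply: eq_bigr => i _.
by rewrite !mxE mulrDl -mulrA.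
Qed.

Let dG_y_continuous : continuous dG_y.
Proof.
have -> : dG_y = \sum_(i < n) (fun z : V => z 0 i * 'D_('e_i) G y).
  by apply: funext => z; rewrite fct_sumE.
apply: (big_ind (fun g : V -> R => continuous g)) => [|g1 g2 c1 c2|i _] z.
- exact: (@cst_continuous _ _ (0 : R)).
- by apply: continuousD; [exact: c1|exact: c2].
- by apply: (@continuousM _ _ (fun z : V => z 0 i));
    [exact: coord_continuous|exact: cst_continuous].
Qed.

Lemma partials_taylor_le eps : 0 < eps ->
  \forall d \near (0 : V), `|G (d + y) - G y - dG_y d| <= eps * `|d|.
Proof.
move=> e0; pose e' := eps / n.+1%:R.
have e'0 : 0 < e' by rewrite divr_gt0 // ltr0n.
have near_y : \forall z \near y,
    forall i, `|'D_('e_i) G y - 'D_('e_i) G z| <= e'.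
  apply: (@filter_forall _ _
    (fun i z => `|'D_('e_i) G y - 'D_('e_i) G z| <= e') _ (nbhs_filter y)) => i.
  by move/cvgrPdist_le : (cdG i) => /(_ e' e'0).
have [r r0 ball_r] := (nbhs_ballP _ _).1 (filterI (open_nbhs_nbhs (conj oU Uy)) near_y).
apply/nbhs_ballP; exists r => // d; rewrite -ball_normE /= sub0r normrN => dr.
have step (i : 'I_n) : `|G (y + row_prefix i.+1 d) - G (y + row_prefix i d) -
    d 0 i * 'D_('e_i) G y| <= `|d 0 i| * e'.
  rewrite row_prefixS addrA.
  have := @mvt_deviation (fun s => G (y + row_prefix i d + s *: 'e_i))
    (d 0 i) ('D_('e_i) G y) e'.
  rewrite /= scale0r addr0; apply => s sd.
  have [|Uz Dz] := ball_r (y + row_prefix i d + s *: 'e_i).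
    rewrite -ball_normE /= -addrA opprD addrA subrr add0r normrN.
    exact: le_lt_trans (norm_row_prefix_shift sd) dr.
  have [dl ->] := derivable_along_line (dG _ i Uz).
  by split=> //; rewrite distrC.
have -> : G (d + y) - G y - dG_y d = \sum_(i < n)
    (G (y + row_prefix i.+1 d) - G (y + row_prefix i d) - d 0 i * 'D_('e_i) G y).
  rewrite sumrB /dG_y; congr (_ - _).
  rewrite -(big_mkord xpredT (fun i => G (y + row_prefix i.+1 d) - G (y + row_prefix i d))).
  by rewrite telescope_sumr // row_prefix_full row_prefix0 addr0 [d + y]addrC.
apply: le_trans (ler_norm_sum _ _ _) _; apply: le_trans (ler_sum _ (fun i _ => step i)) _.
apply: (@le_trans _ _ (\sum_(i < n) `|d| * e')).
  by apply: ler_sum => i _; apply: ler_wpM2r; [exact: ltW|exact: normr_mx_entry_le].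
rewrite sumr_const card_ord -mulr_natl.
have -> : n%:R * (`|d| * e') = (eps * `|d|) * (n%:R / n.+1%:R).
  by rewrite /e'; move: (n%:R) (n.+1%:R) (`|d|) => a b c; ring.
rewrite ler_piMr // ?mulr_ge0 ?(ltW e0) //.
by rewrite ler_pdivrMr ?ltr0n // mul1r ler_nat.
Qed.

Lemma differentiable_of_partials : differentiable G y.
Proof.
pose L : {linear V -> R} := HB.pack dG_y (GRing.isLinear.Build _ _ _ _ dG_y dG_y_linear).
have GE : G \o shift y = cst (G y) + L +o_ (0 : V) id.
  apply/eqaddoP => eps e0; have taylor := partials_taylor_le _ e0; near=> d.
  rewrite /= opprD addrA; near: d; exact: taylor.
have cL : continuous L := dG_y_continuous.
by apply/diff_locallyP; rewrite (diff_unique cL GE).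
Unshelve. all: by end_near.
Qed.

End ContinuousPartials.

Lemma differentiable_of_partials_rV a (G : V -> 'rV[R]_a) (U : set V) y :
  open U -> U y -> (forall z i, U z -> derivable G z ('e_i)) ->
  (forall i, {for y, continuous (fun z => 'D_('e_i) G z)}) ->
  differentiable G y.
Proof.
move=> oU Uy dG cdG.
have coordG j : differentiable (fun z => G z 0 j) y.
  apply: (differentiable_of_partials _ _ _ oU Uy) => [z i Uz|i].
    by move/derivable_mxP: (dG z i Uz); apply.
  apply: (@near_eq_continuous _ _ _ (fun z => 'D_('e_i) G z 0 j)).
    apply: filterS (open_nbhs_nbhs (conj oU Uy)) => z Uz.
    by rewrite (derive_mx (dG z i Uz)) mxE.
  exact: continuous_comp (cdG i) (@coord_continuous R _ _ 0 j _).
have -> : G = \sum_(j < a) (fun z => G z 0 j *: 'e_j).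
  by rewrite fct_sumE; apply: funext => z; rewrite [LHS]row_sum_delta.
by apply: differentiable_sum => j; apply: differentiableZl.
Qed.

End PartialDerivatives.
Arguments differentiable_of_partials_rV {R n a G U y}.

Section SmoothComp.
Context {R : realType}.
Local Notation E n := 'rV[R]_n.

Lemma derive_dirE {V W : normedModType R} (f : V -> W) x v :
  'D_v f x = 'D_1 (fun h : R => f (h *: v + x)) 0.
Proof.
rewrite /derive; set g1 := fun h => h^-1 *: _; set g2 := fun h => h^-1 *: _.
suff -> : g1 = g2 by [].
by apply: funext => h; rewrite /g1 /g2 /= addr0 scale0r add0r [_%:A]mulr1.
Qed.

Lemma derive_comp {k n a} {F : E k -> E n} {G : E n -> E a} {x v} :
  derivable F x v -> differentiable G (F x) ->
  derivable (G \o F) x v /\ 'D_v (G \o F) x = 'd G (F x) ('D_v F x).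
Proof.
move=> dF dG; pose line h := F (h *: v + x).
have dline : differentiable line 0 by apply/derivable1_diffP/(derivable1P F x v).1.
have line0 : line 0 = F x by rewrite /line scale0r add0r.
have dG' : differentiable G (line 0) by rewrite line0.
have dGline : differentiable (G \o line) 0 by exact: differentiable_comp.
split; first by apply/derivable1P/derivable1_diffP.
rewrite (derive_dirE (G \o F)) (derive_dirE F) -/line.
rewrite (deriveE (1 : R) dGline) (diff_comp dline dG') /= line0.
by rewrite -(deriveE (1 : R) dline).
Qed.

Lemma diff_rV n a (G : E n -> E a) y w :
  differentiable G y -> 'd G y w = \sum_(i < n) w 0 i *: 'D_'e_i G y.
Proof.
move=> dG; rewrite [in LHS](row_sum_delta w) linear_sum.
by apply: eq_bigr => i _; rewrite linearZ /= -deriveE.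
Qed.

Lemma smooth_upto1_differentiable {n a} {U : set (E n)} {G : E n -> E a} {y} :
  open U -> smooth_upto 1 U G -> U y -> differentiable G y.
Proof.
move=> oU sG Uy; apply: (differentiable_of_partials_rV oU Uy) => [z i Uz|i].
  exact: smooth_upto_derivable sG Uz.
by have [] := sG [:: 'e_i] (leqnn _) y Uy.
Qed.

Section Composition.
Variables (k n : nat) (V : set (E k)) (U : set (E n)) (F : E k -> E n).
Hypotheses (oV : open V) (oU : open U) (FVU : forall x, V x -> U (F x))
  (sF : forall N, smooth_upto N V F).

Lemma derive_comp_partials a (G : E n -> E a) x v :
  smooth_upto 1 U G -> V x ->
  'D_v (G \o F) x = \sum_(i < n) ('D_v F x) 0 i *: 'D_'e_i G (F x).
Proof.
move=> sG Vx; have dG := smooth_upto1_differentiable oU sG (FVU _ Vx).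
have [_ ->] := derive_comp (smooth_upto_derivable v (sF 0) Vx) dG.
exact: diff_rV.
Qed.

Lemma smooth_upto_comp N a (G : E n -> E a) :
  (forall M, smooth_upto M U G) -> smooth_upto N V (G \o F).
Proof.
have comp0 (G' : E n -> E a) : (forall M, smooth_upto M U G') -> smooth_upto 0 V (G' \o F).
  move=> sG; apply/smooth_upto0P => x Vx.
  have [cF _] := sF 0 [::] (leqnn _) x Vx.
  have [cG _] := sG 0 [::] (leqnn _) (F x) (FVU _ Vx).
  have dG := smooth_upto1_differentiable oU (sG 1) (FVU _ Vx).
  split=> [|v]; first exact: continuous_comp cF cG.
  by have [] := derive_comp (smooth_upto_derivable v (sF 0) Vx) dG.
elim: N G => [|N IH] G sG; first exact: comp0.
apply/smooth_uptoS; split=> [|v]; first exact: comp0.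
apply: (@smooth_upto_eq _ _ _ N V
  (fun x => \sum_(i < n) ('D_v F x) 0 i *: ('D_'e_i G \o F) x)) => //.
  by move=> x Vx; rewrite derive_comp_partials.
apply: smooth_upto_sum => // i; apply: smooth_uptoZl => //.
  apply: smooth_upto_coord => //.
  by have /smooth_uptoS[_] := sF N.+1; apply.
by apply: IH => M; have /smooth_uptoS[_] := sG M.+1; apply.
Qed.

End Composition.

Lemma smooth_on_comp k n a (V : set (E k)) (U : set (E n))
  (F : E k -> E n) (G : E n -> E a) :
  open V -> open U -> (forall x, V x -> U (F x)) ->
  smooth_on R V F -> smooth_on R U G -> smooth_on R V (G \o F).
Proof.
move=> oV oU FVU /smooth_onE sF /smooth_onE sG; apply/smooth_onE => N.
exact: smooth_upto_comp _ _ _ _ _ oV oU FVU sF N a G sG.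
Qed.

Lemma smooth_on_cst k a (U : set (E k)) (c : E a) : smooth_on R U (fun=> c).
Proof. by apply/smooth_onE => N; exact: smooth_upto_cst. Qed.

Lemma smooth_on_id k (U : set (E k)) : smooth_on R U id.
Proof.
have id0 : smooth_upto 0 U (@id (E k)).
  by apply/smooth_upto0P => x _; split=> [|v]; [exact: cvg_id|exact: derivable_id].
apply/smooth_onE => -[|N] //; apply/smooth_uptoS; split=> // v.
have -> : (fun x => 'D_v id x) = fun=> v by apply: funext => x; rewrite derive_id.
exact: smooth_upto_cst.
Qed.

End SmoothComp.

Section FatCells.
Context {R : realType}.

Lemma Rintegral_itv_eq0 (a b : R) (f : R -> R) :
  (forall x, a <= x <= b -> f x = 0) ->
  (\int[lebesgue_measure]_(x in `[a, b]) f x)%R = 0.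
Proof.
move=> f0; rewrite (@eq_Rintegral _ _ _ _ _ (cst 0)) ?Rintegral_cst ?mul0r //.
by move=> x; rewrite inE /= in_itv /= => /f0.
Qed.

Lemma ell_ge0 (t : R) : 0 <= ell R t.
Proof. by rewrite /ell; case: ifP => // _; exact: expR_ge0. Qed.

Lemma bump_ge0 (t : R) : 0 <= Defs.bump R t.
Proof. by rewrite /Defs.bump mulr_ge0 // ell_ge0. Qed.

Lemma bump_le0 (t : R) : t <= 0 -> Defs.bump R t = 0.
Proof.
by move=> t0; rewrite /Defs.bump /ell ifT ?mul0r // pmulr_rle0 // ltr0n.
Qed.

Lemma lambda_ge0 (t : R) : 0 <= t -> 0 <= lambda R t.
Proof.
move=> t0; rewrite /lambda /alpha0 /oint ler01 t0.
by rewrite mulr_ge0 ?invr_ge0 //; apply: Rintegral_ge0 => x _; exact: bump_ge0.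
Qed.

Lemma lambda_le0 (t : R) : t <= 0 -> lambda R t = 0.
Proof.
move=> t0; rewrite /lambda /oint; case: ifP => _;
  rewrite Rintegral_itv_eq0 ?oppr0 ?mulr0 // => x /andP[_ x0]; apply: bump_le0.
- exact: le_trans x0 t0.
- exact: x0.
Qed.

Lemma phi_ge0 (t : R) : 0 <= phi R t.
Proof.
rewrite /phi /oint; case: ifP => s0.
  by apply: Rintegral_ge0 => x; rewrite /= in_itv /= => /andP[x0 _]; exact: lambda_ge0.
by rewrite Rintegral_itv_eq0 ?oppr0 // => x /andP[_ x0]; exact: lambda_le0.
Qed.

Lemma fat_sphere_disk {a b} {p : 'rV[R]_a * 'rV[R]_b} :
  fat_sphere R a b p -> fat_disk R a b p.
Proof. by apply: le_trans; rewrite gerBl phi_ge0. Qed.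

End FatCells.

Lemma exist_irr {A : Type} {P : A -> Prop} {x y : A} (p : P x) (q : P y) :
  x = y -> exist P x p = exist P y q.
Proof. by move=> xy; subst y; rewrite (Prop_irrelevance p q). Qed.

Definition sub_incl {T : Type} {V U : set T} (VU : forall y, V y -> U y)
  (y : {y | V y}) : {y | U y} := exist _ (proj1_sig y) (VU _ (proj2_sig y)).

Section Diffeologies.
Context {R : realType}.
Local Notation E n := 'rV[R]_n.

Lemma open_smooth_preimage k n (V : set (E k)) (F : E k -> E n) (W : set (E n)) :
  open V -> smooth_on R V F -> open W -> open [set z | V z /\ W (F z)].
Proof.
move=> oV sF oW; have cF : {in V, continuous F}.
  by move=> x /set_mem Vx; have [] := sF [::] x Vx.
exact: (continuous_inP _ oV).1 cF _ oW.
Qed.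

Lemma smooth_on_sub k n (V V' : set (E k)) (f : E k -> E n) :
  (forall x, V' x -> V x) -> smooth_on R V f -> smooth_on R V' f.
Proof. by move=> V'V sf vs x /V'V; exact: sf. Qed.

Definition coarse_diffeology (Z : Type) : plot_set R Z := fun n U _ => open U.

Lemma is_diffeology_coarse Z : is_diffeology R (coarse_diffeology Z).
Proof. by split=> //; split=> //; split. Qed.

Definition open_domains {T : Type} (D : plot_set R T) :=
  forall n U P, D n U P -> open U.

Lemma dsmooth_coarse {A Z : Type} {DA : plot_set R A} (f : A -> Z) :
  open_domains DA -> dsmooth R DA (coarse_diffeology Z) f.
Proof. by move=> oDA n U P /oDA. Qed.

Lemma is_diffeology_sub {Y : Type} (DY : plot_set R Y) (A : set Y) :
  is_diffeology R DY -> is_diffeology R (sub_diffeology R DY A).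
Proof.
move=> [oD [cstD [compD locD]]]; split=> [n U P /oD //|].
split=> [n U x oU|]; first exact: cstD.
split=> [n k U V P F hF oV DP sF|n U P oU locP]; first exact: (compD _ _ _ _ _ _ hF oV DP sF).
apply: locD oU _ => x Ux; have [V [oV [Vx [hVU DV]]]] := locP x Ux.
by exists V; split=> //; split=> //; exists hVU.
Qed.

Section Pushout.
Context {A B C P : Type} {DA : plot_set R A} {DB : plot_set R B}
  {DC : plot_set R C} {DP : plot_set R P} {i : A -> B -> Prop}
  {h : A -> C} {k : C -> P} {g : B -> P}.
Hypotheses (po : is_pushout R DA DB DC DP i h k g)
  (oB : open_domains DB) (oC : open_domains DC) (oP : open_domains DP).

(* Maps into a coarse space are smooth, so the universal property of the
   pushout applies to arbitrary functions: it is a pushout of sets. *)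
Let po_coarse (Z : Type) (f1 : C -> Z) (f2 : B -> Z) :
  (forall a b, i a b -> f1 (h a) = f2 b) ->
  exists u : P -> Z, (forall c, u (k c) = f1 c) /\ (forall b, u (g b) = f2 b) /\
    forall u' : P -> Z, (forall c, u' (k c) = f1 c) -> (forall b, u' (g b) = f2 b) ->
    forall p, u' p = u p.
Proof.
move=> f12; have [_ [_ [_ univ]]] := po.
have [u [_ [uk [ug uniq]]]] := univ Z _ (is_diffeology_coarse Z) f1 f2
  (dsmooth_coarse _ oC) (dsmooth_coarse _ oB) f12.
exists u; do 2!split=> //; move=> u' u'k u'g.
by apply: uniq => //; exact: dsmooth_coarse.
Qed.

Lemma pushout_cover p : (exists c, k c = p) \/ (exists b, g b = p).
Proof.
have [u [uk [ug uniq]]] := @po_coarse Prop (fun=> True) (fun=> True) (fun _ _ _ => erefl).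
change ((fun q => (exists c, k c = q) \/ (exists b, g b = q)) p).
rewrite (uniq _ _ _ p) => [|c|b]; last 2 first.
- by apply/propext; split=> // _; left; exists c.
- by apply/propext; split=> // _; right; exists b.
by rewrite -(uniq (fun=> True)).
Qed.

Lemma pushout_eq_attach c b : k c = g b -> exists a, h a = c.
Proof.
pose attached c := exists a, h a = c.
have [u [uk [ug _]]] := @po_coarse Prop attached (fun=> True)
  (fun a _ _ => propext (conj (fun=> I) (fun=> ex_intro _ a erefl))).
by move=> kcgb; have := ug b; rewrite -kcgb uk /attached => ->.
Qed.

Lemma pushout_inj b1 b2 : g b1 = g b2 -> (exists a, i a b1) \/ b1 = b2.
Proof.
pose tag b := if pselect (exists a, i a b) then None else Some b.
have tagE a b : i a b -> None = tag b.
  by move=> iab; rewrite /tag; case: pselect => // -[]; exists a.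
have [u [_ [ug _]]] := @po_coarse (option B) (fun=> None) tag tagE.
move=> gb12; move: (ug b1); rewrite gb12 ug /tag.
case: (pselect (exists a, i a b1)) => [iab1 _|nib1]; first by left.
by case: (pselect (exists a, i a b2)) => // nib2 [->]; right.
Qed.

End Pushout.
End Diffeologies.

Section Cells.
Context {R : realType} {n : nat} {J : Type} {m : J -> nat}.
Local Notation E k := 'rV[R]_k.
Local Notation DD := (cells_D_diffeology R n m).
Local Notation DS := (cells_S_diffeology R n m).

Lemma cells_D_plot_cst k (U : set (E k)) b : open U -> DD k U (fun=> b).
Proof.
move=> oU; split=> // x; case: b => j [p Dp].
exists U; split=> //; split; first exact: (proj2_sig x).
exists (fun y Uy => Uy), j, (fun=> exist _ p Dp); split=> //.
split=> //; exists (fun=> p.1), (fun=> p.2).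
split; first exact: smooth_on_cst.
by split=> [|_]; [exact: smooth_on_cst|exact: surjective_pairing].
Qed.

Lemma cells_D_plot_comp {k k'} {U : set (E k)} {V : set (E k')} {L} {F : E k' -> E k}
  (FVU : forall y, V y -> U (F y)) : open V -> DD k U L -> smooth_on R V F ->
  DD k' V (fun y => L (exist _ (F (proj1_sig y)) (FVU _ (proj2_sig y)))).
Proof.
move=> oV [oU DL] sF; split=> // y.
have [W [oW [WFy [WU [j [Q [[_ [G1 [G2 [sG1 [sG2 QE]]]]] LE]]]]]]] :=
  DL (exist _ (F (proj1_sig y)) (FVU _ (proj2_sig y))).
pose V' := [set z | V z /\ W (F z)].
have oV' : open V' by apply: open_smooth_preimage.
have sF' : smooth_on R V' F by apply: smooth_on_sub sF => z [].
exists V'; split=> //; split; first by split; [exact: (proj2_sig y)|exact: WFy].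
exists (fun z V'z => proj1 V'z), j,
  (fun z => Q (exist _ (F (proj1_sig z)) (proj2 (proj2_sig z)))).
split.
  split=> //; exists (G1 \o F), (G2 \o F).
  split; first by apply: smooth_on_comp sF' sG1 => // z [].
  split; first by apply: smooth_on_comp sF' sG2 => // z [].
  by move=> z; rewrite QE.
by move=> z /=; rewrite -LE /=; congr L; exact: exist_irr.
Qed.

Definition cell_incl (s : cells_S R n m) : cells_D R n m :=
  existT _ (projT1 s) (exist _ (proj1_sig (projT2 s))
    (fat_sphere_disk (proj2_sig (projT2 s)))).

Lemma incl_SDP a b : incl_SD R n m a b <-> b = cell_incl a.
Proof.
split=> [[j [p [Sp [Dp [-> ->]]]]]|->]; first by congr existT; exact: exist_irr.
by case: a => j [p Sp]; exists j, p, Sp, (fat_sphere_disk Sp).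
Qed.

Lemma dsmooth_cell_incl : dsmooth R DS DD cell_incl.
Proof.
move=> k U Q [oU DQ]; split=> // x.
have [W [oW [Wx [WU [j [Q' [DQ' QE]]]]]]] := DQ x.
exists W; split=> //; split=> //; exists WU, j,
  (fun y => exist _ (proj1_sig (Q' y)) (fat_sphere_disk (proj2_sig (Q' y)))).
by split=> // y; rewrite /cell_incl QE.
Qed.

End Cells.

Section RegularAttachment.
Context {R : realType}.
Local Notation E k := 'rV[R]_k.
Variables (X : Type) (DX : plot_set R X)
  (skel : nat -> set X) (skel_sub : forall n x, skel n x -> skel n.+1 x)
  (J : nat -> Type) (m : forall n, J n -> nat)
  (h : forall n, cells_S R n (m n) -> {x | prevskel X skel n x})
  (hhat : forall n, cells_D R n (m n) -> {x | skel n x}) (n : nat).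
Local Notation DS := (cells_S_diffeology R n (m n)).
Local Notation DD := (cells_D_diffeology R n (m n)).
Local Notation DC := (prevskel_diffeology R X DX skel n).
Local Notation DP := (skel_diffeology R X DX skel n).
Local Notation incl := (skel_incl X skel skel_sub n).
Hypotheses (dX : is_diffeology R DX)
  (po : is_pushout R DS DD DC DP (incl_SD R n (m n)) (h n) incl (hhat n))
  (h_ind : induction R DS DC (h n)) (h_open : D_open R DC (range (h n))).

Let dC : is_diffeology R DC := is_diffeology_sub _ _ dX.
Let dP : is_diffeology R DP := is_diffeology_sub _ _ dX.
Let oD : open_domains DD. Proof. by move=> k U L []. Qed.

Lemma hhat_attach s : incl (h n s) = hhat n (cell_incl s).
Proof. by have [_ [_ [glue _]]] := po; apply: glue; apply/incl_SDP. Qed.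

Lemma hhat_inj : injective (hhat n).
Proof.
have incl_inj : injective incl.
  by move=> [x1 p1] [x2 p2] /(f_equal (@proj1_sig _ _)) /= x12; exact: exist_irr.
move=> b1 b2 b12.
have [[a1 /incl_SDP b1E]|//] := pushout_inj po oD dC.1 dP.1 _ _ b12.
have [[a2 /incl_SDP b2E]|-> //] := pushout_inj po oD dC.1 dP.1 _ _ (esym b12).
by move: b12; rewrite b1E b2E -!hhat_attach => /incl_inj /(proj1 h_ind) ->.
Qed.

(* [hhat n] is an induction onto a D-open set as soon as every plot of the
   skeleton is a lifting plot (lemma [skel_plot_lifts]). *)
Definition lifting_plots : plot_set R {x | skel n x} := fun k U Q =>
  DP k U Q /\
  forall x (Ux : U x), range (hhat n) (Q (exist _ x Ux)) ->
    exists V : set (E k), open V /\ V x /\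
      exists (VU : forall y, V y -> U y) (L : {y | V y} -> cells_D R n (m n)),
        DD k V L /\ forall y, hhat n (L y) = Q (sub_incl VU y).

Lemma lifting_plots_comp {k k'} {U : set (E k)} {V : set (E k')} {Q}
    {F : E k' -> E k} (FVU : forall y, V y -> U (F y)) :
  open V -> lifting_plots k U Q -> smooth_on R V F ->
  lifting_plots k' V (fun y => Q (exist _ (F (proj1_sig y)) (FVU _ (proj2_sig y)))).
Proof.
move=> oV [DQ liftQ] sF; split; first by have [_ [_ [compP _]]] := dP; exact: (compP _ _ _ _ _ _ FVU oV DQ sF).
move=> y Vy /liftQ[W [oW [WFy [WU [L [DL LE]]]]]].
pose V' := [set z | V z /\ W (F z)].
have oV' : open V' by apply: open_smooth_preimage.
have sF' : smooth_on R V' F by apply: smooth_on_sub sF => z [].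
exists V'; split=> //; split=> //; exists (fun z V'z => proj1 V'z).
exists (fun z => L (exist _ (F (proj1_sig z)) (proj2 (proj2_sig z)))).
split; first exact: (cells_D_plot_comp (fun z V'z => proj2 V'z) oV' DL sF').
by move=> z; rewrite LE; congr Q; exact: exist_irr.
Qed.

Lemma is_diffeology_lifting : is_diffeology R lifting_plots.
Proof.
have [oP [cstP [_ locP]]] := dP.
split=> [k U Q [/oP //]|]; split.
  move=> k U p oU; split=> [|x Ux [b _ bp]]; first exact: cstP.
  exists U; split=> //; split=> //; exists (fun y Uy => Uy), (fun=> b).
  by split; first exact: cells_D_plot_cst.
split=> [k k' U V Q F FVU oV ZQ sF|k U Q oU locQ]; first exact: (lifting_plots_comp FVU oV ZQ sF).
split.
  apply: locP oU _ => x Ux; have [V [oV [Vx [VU [DV _]]]]] := locQ x Ux.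
  by exists V; split=> //; split=> //; exists VU.
move=> x Ux Qx; have [V [oV [Vx [VU [_ liftV]]]]] := locQ x Ux.
have [|W [oW [Wx [WV [L [DL LE]]]]]] := liftV x Vx.
  by rewrite /sub_incl /= (exist_irr (VU x Vx) Ux erefl).
exists W; split=> //; split=> //; exists (fun y Wy => VU y (WV y Wy)), L.
by split=> // y; rewrite LE.
Qed.

Lemma dsmooth_incl_lifting : dsmooth R DC lifting_plots incl.
Proof.
move=> k U Q DQ; split; first by have [sk _] := po; exact: sk.
move=> x Ux [b _ bQx]; have [a aQx] := pushout_eq_attach po oD dC.1 dP.1 _ _ (esym bQx).
pose W := [set y | exists Uy : U y, range (h n) (Q (exist _ y Uy))].
have WU y : W y -> U y by case.
have Wh y (Wy : W y) : range (h n) (Q (sub_incl WU (exist _ y Wy))).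
  by have [Uy hQy] := Wy; rewrite /sub_incl /= (exist_irr (WU y Wy) Uy erefl).
pose QW y : {p | range (h n) p} := exist _ _ (Wh _ (proj2_sig y)).
have DQW : sub_diffeology R DC (range (h n)) k W QW.
  have [_ [_ [compC _]]] := dC.
  by have := compC _ _ U W Q id WU (h_open _ _ _ DQ) DQ (smooth_on_id _ _); apply.
have [_ [_ [_ [hinv [dhinv [_ hhinv]]]]]] := h_ind.
exists W; split; first exact: h_open _ _ _ DQ.
split; first by exists Ux, a.
exists WU, (fun y => cell_incl (hinv (QW y))); split.
  by apply: dsmooth_cell_incl; exact: dhinv.
by move=> y; rewrite -hhat_attach; have := f_equal (@proj1_sig _ _) (hhinv (QW y)); move=> /= ->.
Qed.

Lemma dsmooth_hhat_lifting : dsmooth R DD lifting_plots (hhat n).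
Proof.
move=> k U Q DQ; split=> [|x Ux _]; first by have [_ [sg _]] := po; exact: sg.
exists U; split; first exact: oD DQ.
by split=> //; exists (fun y Uy => Uy), Q; split=> // -[].
Qed.

Lemma skel_plot_lifts k U Q : DP k U Q -> lifting_plots k U Q.
Proof.
have [_ [_ [glue univ]]] := po.
have [u [du [uk [ug _]]]] := univ _ _ is_diffeology_lifting incl (hhat n)
  dsmooth_incl_lifting dsmooth_hhat_lifting glue.
have u_id p : u p = p.
  by case: (pushout_cover po oD dC.1 dP.1 p) => [[c <-]|[b <-]]; rewrite ?uk ?ug.
by move=> /du; rewrite (funext (fun x => u_id (Q x))).
Qed.

Lemma hhat_D_open : D_open R DP (range (hhat n)).
Proof.
move=> k U Q /skel_plot_lifts[_ liftQ]; rewrite openE => x [Ux /liftQ].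
move=> [V [oV [Vx [VU [L [_ LE]]]]]].
apply: filterS (open_nbhs_nbhs (conj oV Vx)) => y Vy; exists (VU y Vy).
by exists (L (exist _ y Vy)) => //; rewrite LE.
Qed.

Lemma hhat_induction : induction R DD DP (hhat n).
Proof.
have dhhat : dsmooth R DD DP (hhat n) by have [_ []] := po.
split; first exact: hhat_inj.
split=> //; split; first by move=> k U Q /dhhat.
pose hhinv (q : {p | range (hhat n) p}) := s2val (cid2 (proj2_sig q)).
have hhinvK q : hhat n (hhinv q) = proj1_sig q := s2valP' (cid2 (proj2_sig q)).
exists hhinv; split.
  move=> k U Q /[dup] /skel_plot_lifts[_ liftQ] /(dP.1) oU; split=> // -[x Ux].
  have [V [oV [Vx [VU [L [[_ DL] LE]]]]]] := liftQ x Ux (proj2_sig (Q (exist _ x Ux))).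
  have [W [oW [Wx [WV [j [L' [DL' L'E]]]]]]] := DL (exist _ x Vx).
  exists W; split=> //; split=> //.
  exists (fun y Wy => VU y (WV y Wy)), j, L'; split=> // y.
  by apply: hhat_inj; rewrite hhinvK -(L'E y) LE.
split=> [b|[p r]]; first by apply: hhat_inj; rewrite hhinvK.
by apply: exist_irr; exact: (hhinvK (exist _ p r)).
Qed.

End RegularAttachment.

Theorem proposition7p2
  (X : Type) (DX : plot_set Rdefinitions.R X)
  (skel : nat -> set X) (skel_sub : forall n x, skel n x -> skel n.+1 x)
  (J : nat -> Type) (m : forall n, J n -> nat)
  (h : forall n, cells_S Rdefinitions.R n (m n) -> {x | prevskel X skel n x})
  (hhat : forall n, cells_D Rdefinitions.R n (m n) -> {x | skel n x}) :
  is_regular_CW Rdefinitions.R X DX skel skel_sub J m h hhat ->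
  forall n : nat,
    induction Rdefinitions.R (cells_D_diffeology Rdefinitions.R n (m n))
              (skel_diffeology Rdefinitions.R X DX skel n) (hhat n) /\
    D_open Rdefinitions.R (skel_diffeology Rdefinitions.R X DX skel n)
           (range (hhat n)).
Proof.
move=> [[dX [_ [po _]]] regular] n; have [h_ind h_open] := regular n.
split; first exact: hhat_induction (po n) h_ind h_open.
exact: hhat_D_open (po n) h_ind h_open.
Qed.
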